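(* Let $\mathcal T\subseteq\mathbb N$ be a symmetric numerical semigroup with minimal system of generators $a_1<\dots<a_n$. If $2\notin\mathcal T$, then $a_n<F(\mathcal T)$.
   Context: A numerical semigroup is a submonoid $\mathcal T\subseteq\mathbb N$ with finite complement; its Frobenius number is $F(\mathcal T)=\max(\mathbb N\setminus\mathcal T)$; $\mathcal T$ is symmetric if for every $b\in\mathbb N$, $b\in\mathcal T$ or $F(\mathcal T)-b\in\mathcal T$. The minimal system of generators is the unique minimal generating set of $\mathcal T$ as a monoid. *)

From mathcomp Require Import all_boot.
Set Implicit Arguments. Unset Strict Implicit. Unset Printing Implicit Defensive.

Definition numerical_semigroup (T : nat -> Prop) : Prop :=
  [/\ T 0, (forall x y, T x -> T y -> T (x + y)) &
      exists N, forall n, N <= n -> T n].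

Definition is_frobenius (T : nat -> Prop) (f : nat) : Prop :=
  ~ T f /\ (forall n, ~ T n -> n <= f).

Definition symmetric_wrt (T : nat -> Prop) (f : nat) : Prop :=
  forall b, T b \/ (b <= f /\ T (f - b)).

Inductive generated (G : seq nat) : nat -> Prop :=
  | gen0 : generated G 0
  | genS : forall g x, g \in G -> generated G x -> generated G (g + x).

Definition generates (G : seq nat) (T : nat -> Prop) : Prop :=
  forall x, generated G x <-> T x.

Definition minimal_generators (T : nat -> Prop) (G : seq nat) : Prop :=
  [/\ sorted ltn G, generates G T &
      forall g, g \in G -> ~ generates (rem g G) T].

(* Suppose the largest minimal generator a exceeds F and put d = a - F.  A
   minimal generator is not a sum of two positive elements of T, so for every
   s in T with 0 < s < a symmetry applied to a - s yields s - d in T.  Hence d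
   divides every element of T below a.  Since 1, 2 are gaps, symmetry puts
   F - 1 and F - 2 in T, so d = 1; then T contains every number below F - 1,
   in particular 1, a contradiction. *)
From mathcomp Require Import all_boot.
From mathcomp Require Import zify.

Set Implicit Arguments.
Unset Strict Implicit.
Unset Printing Implicit Defensive.

Lemma generatedD G x y : generated G x -> generated G y -> generated G (x + y).
Proof.
elim=> [|g x' gG _ IH] Gy //.
by rewrite -addnA; apply: genS => //; apply: IH.
Qed.

Lemma generated_sub G H x : {subset G <= H} -> generated G x -> generated H x.
Proof.
move=> sGH; elim=> [|g x' gG _ IH]; first exact: gen0.
by apply: genS => //; apply: sGH.
Qed.

Lemma generated_rem G g x : generated G x -> x < g -> generated (rem g G) x.
Proof.
elim=> [|h x' hG _ IH] lt_x_g; first exact: gen0.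
apply: genS; last by apply: IH; lia.
by apply: rem_mem => //; apply/eqP => ehg; lia.
Qed.

Lemma generates_last G T : generates G T -> T (last 0 G).
Proof.
move=> GT; apply/GT; case: G GT => [|g0 G] _; first exact: gen0.
by rewrite -[last _ _]addn0; apply: genS; [apply: mem_last | apply: gen0].
Qed.

Lemma minimal_generator_indecomposable T G g s t :
  generates G T -> ~ generates (rem g G) T -> g \in G ->
  T s -> T t -> 0 < s -> 0 < t -> s + t != g.
Proof.
move=> GT not_remGT gG Ts Tt s_gt0 t_gt0; apply/eqP => def_g.
apply: not_remGT => x; split.
  by move=> remGx; apply/GT; apply: generated_sub remGx => y; apply: mem_rem.
move/GT; elim=> [|h y hG _ IH]; first exact: gen0.
have [-> | neq_hg] := eqVneq h g; last by apply: genS => //; apply: rem_mem.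
have generated_lt_g z : T z -> z < g -> generated (rem g G) z.
  by move=> Tz lt_z_g; apply: generated_rem => //; apply/GT.
rewrite -[in X in generated _ X]def_g -addnA.
by apply: generatedD; [|apply: generatedD] => //; apply: generated_lt_g => //; lia.
Qed.

Section SymmetricBelowIndecomposable.

Variables (T : nat -> Prop) (F a : nat).
Hypotheses (symT : symmetric_wrt T F) (lt_F_a : F < a).
Hypothesis indecomposable_a :
  forall s t, T s -> T t -> 0 < s -> 0 < t -> s + t != a.

Lemma symmetric_sub_gap s :
  T s -> 0 < s -> s < a -> a - F <= s /\ T (s - (a - F)).
Proof.
move=> Ts s_gt0 lt_s_a.
have [Tas | [le_as_F TFas]] := symT (a - s).
  by have /eqP := indecomposable_a Ts Tas s_gt0 ltac:(lia); lia.
by split; [lia | have -> : s - (a - F) = F - (a - s) by lia].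
Qed.

Lemma dvdn_gap_below s : T s -> s < a -> a - F %| s.
Proof.
elim/ltn_ind: s => s IH Ts lt_s_a.
have [-> // | s_gt0] := posnP s.
have [le_d_s Tsd] := symmetric_sub_gap Ts s_gt0 lt_s_a.
by rewrite -(dvdn_subl le_d_s (dvdnn _)) IH //; lia.
Qed.

Lemma gap_eq1 : ~ T 1 -> ~ T 2 -> a - F = 1.
Proof.
move=> notT1 notT2.
have [le2F TF2] : 2 <= F /\ T (F - 2) by case: (symT 2).
have [_ TF1] : 1 <= F /\ T (F - 1) by case: (symT 1).
have : a - F %| (F - 1) - (F - 2) by apply: dvdn_sub; apply: dvdn_gap_below => //; lia.
have -> : (F - 1) - (F - 2) = 1 by lia.
by rewrite dvdn1 => /eqP.
Qed.

Lemma gap_eq1_mem_le s t : a - F = 1 -> T s -> s < a -> t <= s -> T t.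
Proof.
move=> d1; elim/ltn_ind: s => s IH Ts lt_s_a le_t_s.
have [-> // | lt_t_s] := eqVneq t s.
have [_] := symmetric_sub_gap Ts ltac:(lia) lt_s_a.
by rewrite d1 => Ts1; apply: (IH (s - 1)) => //; lia.
Qed.

Lemma symmetric_gaps12F : ~ T 1 -> ~ T 2 -> False.
Proof.
move=> notT1 notT2; have [le2F _] : 2 <= F /\ T (F - 2) by case: (symT 2).
have [_ TF1] : 1 <= F /\ T (F - 1) by case: (symT 1).
have d1 := gap_eq1 notT1 notT2.
by apply: notT1; apply: (gap_eq1_mem_le d1 TF1); lia.
Qed.

End SymmetricBelowIndecomposable.

Theorem mainTheorem13 (T : nat -> Prop) (F : nat) (G : seq nat) :
  numerical_semigroup T ->
  is_frobenius T F ->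
  symmetric_wrt T F ->
  minimal_generators T G ->
  ~ T 2 ->
  last 0 G < F.
Proof.
move=> [T0 TD _] [notTF _] symT [_ GT minG] notT2.
have notT1 : ~ T 1 by move=> T1; apply: notT2; apply: (TD 1 1).
have Ta := generates_last GT.
rewrite ltnNge leq_eqVlt negb_or; apply/andP; split.
  by apply/eqP => eFa; apply: notTF; rewrite eFa.
apply/negP => lt_F_a.
case: G GT minG Ta lt_F_a => [// | g0 G] GT minG Ta lt_F_a.
have aG := mem_last g0 G.
apply: (symmetric_gaps12F symT lt_F_a) notT1 notT2 => s t Ts Tt s_gt0 t_gt0.
exact: minimal_generator_indecomposable GT (minG _ aG) aG Ts Tt s_gt0 t_gt0.
Qed.
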